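(* Let the finite algebra be $M_{N_i}(\mathbb{C}) \oplus M_{N_j}(\mathbb{C})$ and let the finite Hilbert space of a real, even finite spectral triple of KO-dimension $6$ consist of two building blocks $\mathcal{B}_i$ and $\mathcal{B}_j$ of the first type (i.e. two copies $M_{N_i}(\mathbb{C})_L\oplus M_{N_i}(\mathbb{C})_R$ and $M_{N_j}(\mathbb{C})_L\oplus M_{N_j}(\mathbb{C})_R$ of the adjoint representations, with opposite grading), together with the representation $\mathbf{N}_i\otimes\mathbf{N}_j^o$ (grading $+$) and its conjugate $\mathbf{N}_j\otimes\mathbf{N}_i^o$ (grading $-$). Then on the basis $$\mathbf{N}_i\otimes\mathbf{N}_j^o \oplus M_{N_i}(\mathbb{C})_L \oplus M_{N_i}(\mathbb{C})_R \oplus M_{N_j}(\mathbb{C})_L \oplus M_{N_j}(\mathbb{C})_R \oplus \mathbf{N}_j\otimes\mathbf{N}_i^o$$ the most general finite Dirac operator is $$D_F = \begin{pmatrix} 0 & 0 & A & 0 & B & 0\\ 0 & 0 & M_i & 0 & 0 & JA^*J^*\\ A^* & M_i^* & 0 & 0 & 0 & 0\\ 0 & 0 & 0 & 0 & M_j & JB^*J^*\\ B^* & 0 & 0 & M_j^* & 0 & 0\\ 0 & JAJ^* & 0 & JBJ^* & 0 & 0 \end{pmatrix}$$ with $A : M_{N_i}(\mathbb{C})_R \to \mathbf{N}_i\otimes\mathbf{N}_j^o$ and $B : M_{N_j}(\mathbb{C})_R \to \mathbf{N}_i\otimes\mathbf{N}_j^o$, and $M_i$, $M_j$ maps between the two copies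 of the respective adjoint representations.
   Context: $D_F$ is required to be self-adjoint, to anticommute with the grading $\gamma_F$, to commute with the real structure $J_F$ (which interchanges the $L$ and $R$ copies while taking adjoints, $J_F(m,n)=(n^*,m^* )$, and maps $\mathbf{N}_i\otimes\mathbf{N}_j^o$ to its conjugate), and to satisfy the first-order condition $[[D_F,a],Jb J^{-1}]=0$ for all $a,b$ in the algebra. *)

(* Complex numbers are modelled by algC (algebraic complex
   numbers, a numClosedFieldType with conjugation z^* ). *)
From HB Require Import structures.
From mathcomp Require Import all_boot all_order all_algebra algC.
Set Implicit Arguments. Unset Strict Implicit. Unset Printing Implicit Defensive.
Import Order.TTheory GRing.Theory Num.Theory.
Local Open Scope ring_scope.

Definition mxadj (m n : nat) (x : 'M[algC]_(m, n)) : 'M[algC]_(n, m) :=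
  (map_mx (fun z : algC => z^*) x)^T.

Definition hs (m n : nat) (x y : 'M[algC]_(m, n)) : algC :=
  \sum_(i < m) \sum_(j < n) (x i j)^* * y i j.

(** Hilbert-space adjoint (w.r.t. the Hilbert--Schmidt inner products) of a
    linear map between matrix spaces, written out in the standard basis
    (delta_mx k l) of matrix units:  <f x, y> = <x, opadj f y>. *)
Definition opadj (m n p q : nat) (f : 'M[algC]_(m, n) -> 'M[algC]_(p, q))
  (y : 'M[algC]_(p, q)) : 'M[algC]_(m, n) :=
  \matrix_(k < m, l < n)
     \sum_(r < p) \sum_(s < q) ((f (delta_mx k l)) r s)^* * y r s.

(** The finite Hilbert space, in the order of the basis of the paper:
    N_i (x) N_j^o  (+)  M_{N_i}(C)_L  (+)  M_{N_i}(C)_R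
                   (+)  M_{N_j}(C)_L  (+)  M_{N_j}(C)_R  (+)  N_j (x) N_i^o.
    N_i (x) N_j^o is realised as N_i x N_j complex matrices. *)
Notation Hsp ni nj :=
  ('M[algC]_(ni, nj) * 'M[algC]_ni * 'M[algC]_ni * 'M[algC]_nj * 'M[algC]_nj
   * 'M[algC]_(nj, ni))%type.

Definition hip (ni nj : nat) (h k : Hsp ni nj) : algC :=
  let: (X, mL, mR, nL, nR, Y) := h in
  let: (X', mL', mR', nL', nR', Y') := k in
  hs X X' + hs mL mL' + hs mR mR' + hs nL nL' + hs nR nR' + hs Y Y'.

Definition rep (ni nj : nat) (a : 'M[algC]_ni) (b : 'M[algC]_nj)
  (h : Hsp ni nj) : Hsp ni nj :=
  let: (X, mL, mR, nL, nR, Y) := h in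
  (a *m X, a *m mL, a *m mR, b *m nL, b *m nR, b *m Y).

Definition grad (ni nj : nat) (h : Hsp ni nj) : Hsp ni nj :=
  let: (X, mL, mR, nL, nR, Y) := h in
  (X, mL, - mR, nL, - nR, - Y).

Definition Jr (ni nj : nat) (h : Hsp ni nj) : Hsp ni nj :=
  let: (X, mL, mR, nL, nR, Y) := h in
  (mxadj Y, mxadj mR, mxadj mL, mxadj nR, mxadj nL, mxadj X).


Definition opcomm (ni nj : nat) (S U : Hsp ni nj -> Hsp ni nj)
  (h : Hsp ni nj) : Hsp ni nj := S (U h) - U (S h).

(** D is a finite Dirac operator for the real even spectral triple:
    self-adjoint, anticommutes with the grading, commutes with J, and
    satisfies the first-order condition [[D, a], J b J^{-1}] = 0
    (here J^{-1} = J). *)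
Definition finite_Dirac (ni nj : nat) (D : Hsp ni nj -> Hsp ni nj) : Prop :=
  [/\ (forall h k, hip (D h) k = hip h (D k)),
      (forall h, D (grad h) = - grad (D h)),
      (forall h, D (Jr h) = Jr (D h)) &
      (forall (a c : 'M[algC]_ni) (b d : 'M[algC]_nj) (h : Hsp ni nj),
         opcomm (opcomm D (rep a b)) (fun k => Jr (rep c d (Jr k))) h = 0)].

(** The block form of the theorem, applied to a vector h, on the basis
    (N_i (x) N_j^o, M_{N_i L}, M_{N_i R}, M_{N_j L}, M_{N_j R}, N_j (x) N_i^o):
        row 1:  A mR + B nR
        row 2:  M_i mR + (J A^* J^* ) Y
        row 3:  A^* X + M_i^* mL
        row 4:  M_j nR + (J B^* J^* ) Y
        row 5:  B^* X + M_j^* nL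
        row 6:  (J A J^* ) mL + (J B J^* ) nL                                  *)
Definition block_Dirac (ni nj : nat)
  (A : 'M[algC]_ni -> 'M[algC]_(ni, nj)) (B : 'M[algC]_nj -> 'M[algC]_(ni, nj))
  (Mi : 'M[algC]_ni -> 'M[algC]_ni) (Mj : 'M[algC]_nj -> 'M[algC]_nj)
  (h : Hsp ni nj) : Hsp ni nj :=
  let: (X, mL, mR, nL, nR, Y) := h in
  (A mR + B nR,
   Mi mR + mxadj (opadj A (mxadj Y)),
   opadj A X + opadj Mi mL,
   Mj nR + mxadj (opadj B (mxadj Y)),
   opadj B X + opadj Mj nL,
   mxadj (A (mxadj mL)) + mxadj (B (mxadj nL))).

From HB Require Import structures.
From mathcomp Require Import all_boot all_order all_algebra algC.
Set Implicit Arguments. Unset Strict Implicit. Unset Printing Implicit Defensive.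
Import GRing.Theory Num.Theory.
Local Open Scope ring_scope.

(* D anticommutes with the grading, so it maps the even summands
   N_i (x) N_j^o, M_{N_i,L}, M_{N_j,L} to the odd summands M_{N_i,R}, M_{N_j,R},
   N_j (x) N_i^o and vice versa.  For a = b = (1, 0), the element a acts as the
   projection P onto the summands on which M_{N_i} acts from the left, and
   J b J^-1 as the projection Q onto those on which it acts from the right; the
   first-order condition [[D, P], Q] = 0 kills the three entries linking
   N_i (x) N_j^o to N_j (x) N_i^o and M_{N_i} to M_{N_j}.  Self-adjointness
   identifies the remaining blocks below the diagonal with adjoints of those
   above it, and commutation with J carries the columns of M_{N_i,R}, M_{N_j,R}
   and N_i (x) N_j^o over to those of M_{N_i,L}, M_{N_j,L} and N_j (x) N_i^o. *)

Lemma eqvN0 (R : numFieldType) (V : lmodType R) (v : V) : v = - v -> v = 0.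
Proof.
move=> vN; have : 2%:R *: v == 0 by rewrite scaler_nat mulr2n {1}vN addNr.
by rewrite scaler_eq0 pnatr_eq0 /= => /eqP.
Qed.

Arguments eqvN0 R {V v}.

Lemma pairD (U V : nmodType) (u u' : U) (v v' : V) :
  ((u, v) : U * V) + (u', v') = (u + u', v + v').
Proof. by []. Qed.

Lemma pairN (U V : zmodType) (u : U) (v : V) : - ((u, v) : U * V) = (- u, - v).
Proof. by []. Qed.

Lemma pairZ (R : pzRingType) (U V : lmodType R) (a : R) (u : U) (v : V) :
  a *: ((u, v) : U * V) = (a *: u, a *: v).
Proof. by []. Qed.

Section Adjoints.

Variables m n : nat.

Lemma mxadj0 : mxadj (0 : 'M[algC]_(m, n)) = 0.
Proof. by apply/matrixP=> i j; rewrite !mxE conjC0. Qed.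

Lemma mxadjK (x : 'M[algC]_(m, n)) : mxadj (mxadj x) = x.
Proof. by apply/matrixP=> i j; rewrite !mxE conjCK. Qed.

Lemma hs0l (x : 'M[algC]_(m, n)) : hs 0 x = 0.
Proof. by apply: big1 => i _; apply: big1 => j _; rewrite mxE conjC0 mul0r. Qed.

Lemma hs0r (x : 'M[algC]_(m, n)) : hs x 0 = 0.
Proof. by apply: big1 => i _; apply: big1 => j _; rewrite mxE mulr0. Qed.

Lemma hs_delta_mx (k : 'I_m) (l : 'I_n) (z : 'M[algC]_(m, n)) :
  hs (delta_mx k l) z = z k l.
Proof.
rewrite /hs (bigD1 k) //= [X in _ + X]big1 => [|i /negbTE ik]; last first.
  by apply: big1 => j _; rewrite mxE ik conjC0 mul0r.
rewrite addr0 (bigD1 l) //= [X in _ + X]big1 => [|j /negbTE jl]; last first.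
  by rewrite mxE jl andbF conjC0 mul0r.
by rewrite mxE !eqxx conjC1 mul1r addr0.
Qed.

Lemma opadj_unique p q (f : 'M[algC]_(m, n) -> 'M[algC]_(p, q)) g :
  (forall x y, hs (f x) y = hs x (g y)) -> g =1 opadj f.
Proof.
move=> fg y; apply/matrixP=> k l.
by rewrite mxE -hs_delta_mx -fg.
Qed.

End Adjoints.

Section FiniteDirac.

Variables ni nj : nat.
Implicit Types h : Hsp ni nj.

Definition projL_i h : Hsp ni nj :=
  let: (X, mL, mR, _, _, _) := h in (X, mL, mR, 0, 0, 0).

Definition projR_i h : Hsp ni nj :=
  let: (_, mL, mR, _, _, Y) := h in (0, mL, mR, 0, 0, Y).

Lemma rep10E h : rep 1 0 h = projL_i h.
Proof. by case: h => [[[[[? ?] ?] ?] ?] ?]; rewrite /= !mul1mx !mul0mx. Qed.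

Lemma Jr_rep10_JrE h : Jr (rep 1 0 (Jr h)) = projR_i h.
Proof.
by case: h => [[[[[? ?] ?] ?] ?] ?]; rewrite /= !mul1mx !mul0mx !mxadj0 !mxadjK.
Qed.

Lemma JrK h : Jr (Jr h) = h.
Proof. by case: h => [[[[[? ?] ?] ?] ?] ?]; rewrite /= !mxadjK. Qed.

Lemma hipE h k : hip h k =
  hs h.1.1.1.1.1 k.1.1.1.1.1 + hs h.1.1.1.1.2 k.1.1.1.1.2 + hs h.1.1.1.2 k.1.1.1.2
  + hs h.1.1.2 k.1.1.2 + hs h.1.2 k.1.2 + hs h.2 k.2.
Proof. by case: h => [[[[[? ?] ?] ?] ?] ?]; case: k => [[[[[? ?] ?] ?] ?] ?]. Qed.

Variable D : {linear Hsp ni nj -> Hsp ni nj}.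
Hypothesis HD : finite_Dirac D.

Lemma Dirac_first_order_i h : opcomm (opcomm D projL_i) projR_i h = 0.
Proof.
by case: HD => _ _ _ /(_ 1 1 0 0 h); rewrite /opcomm !Jr_rep10_JrE !rep10E.
Qed.

Lemma Dirac_grad_even h : grad h = h -> grad (D h) = - D h.
Proof. by case: HD => _ Dgrad _ _ gh; rewrite -[LHS]opprK -Dgrad gh. Qed.

Lemma Dirac_grad_odd h : grad h = - h -> grad (D h) = D h.
Proof. by case: HD => _ Dgrad _ _ gh; rewrite -[LHS]opprK -Dgrad gh linearN opprK. Qed.

Lemma Dirac_JrE h : D h = Jr (D (Jr h)).
Proof. by case: HD => _ _ DJ _; rewrite -DJ JrK. Qed.

Lemma Dirac_self_adjoint h k : hip (D h) k = hip h (D k).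
Proof. by case: HD. Qed.

Lemma Dirac0 : D (0, 0, 0, 0, 0, 0) = 0.
Proof. exact: linear0. Qed.

Definition blockA z := (D (0, 0, z, 0, 0, 0)).1.1.1.1.1.
Definition blockB z := (D (0, 0, 0, 0, z, 0)).1.1.1.1.1.
Definition blockMi z := (D (0, 0, z, 0, 0, 0)).1.1.1.1.2.
Definition blockMj z := (D (0, 0, 0, 0, z, 0)).1.1.2.

Lemma linear_comb_MiR a x y : (0, 0, a *: x + y, 0, 0, 0) =
  a *: (0, 0, x, 0, 0, 0) + (0, 0, y, 0, 0, 0) :> Hsp ni nj.
Proof. by rewrite !pairZ !pairD !scaler0 !addr0. Qed.

Lemma linear_comb_MjR a x y : (0, 0, 0, 0, a *: x + y, 0) =
  a *: (0, 0, 0, 0, x, 0) + (0, 0, 0, 0, y, 0) :> Hsp ni nj.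
Proof. by rewrite !pairZ !pairD !scaler0 !addr0. Qed.

Lemma blockA_linear : linear blockA.
Proof.
move=> a x y; rewrite /blockA linear_comb_MiR linearP.
by case: (D _) (D _) => [[[[[? ?] ?] ?] ?] ?] [[[[[? ?] ?] ?] ?] ?]; rewrite !pairZ !pairD.
Qed.

Lemma blockB_linear : linear blockB.
Proof.
move=> a x y; rewrite /blockB linear_comb_MjR linearP.
by case: (D _) (D _) => [[[[[? ?] ?] ?] ?] ?] [[[[[? ?] ?] ?] ?] ?]; rewrite !pairZ !pairD.
Qed.

Lemma blockMi_linear : linear blockMi.
Proof.
move=> a x y; rewrite /blockMi linear_comb_MiR linearP.
by case: (D _) (D _) => [[[[[? ?] ?] ?] ?] ?] [[[[[? ?] ?] ?] ?] ?]; rewrite !pairZ !pairD.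
Qed.

Lemma blockMj_linear : linear blockMj.
Proof.
move=> a x y; rewrite /blockMj linear_comb_MjR linearP.
by case: (D _) (D _) => [[[[[? ?] ?] ?] ?] ?] [[[[[? ?] ?] ?] ?] ?]; rewrite !pairZ !pairD.
Qed.

HB.instance Definition _ := GRing.isLinear.Build algC _ _ _ blockA blockA_linear.
HB.instance Definition _ := GRing.isLinear.Build algC _ _ _ blockB blockB_linear.
HB.instance Definition _ := GRing.isLinear.Build algC _ _ _ blockMi blockMi_linear.
HB.instance Definition _ := GRing.isLinear.Build algC _ _ _ blockMj blockMj_linear.

Lemma Dirac_on_Nij X :
  D (X, 0, 0, 0, 0, 0) = (0, 0, opadj blockA X, 0, opadj blockB X, 0).
Proof.
have adjA y : (D (y, 0, 0, 0, 0, 0)).1.1.1.2 = opadj blockA y.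
  move: y; apply: opadj_unique => x y.
  have := Dirac_self_adjoint (0, 0, x, 0, 0, 0) (y, 0, 0, 0, 0, 0).
  by rewrite !hipE /= !hs0r !hs0l !addr0 !add0r.
have adjB y : (D (y, 0, 0, 0, 0, 0)).1.2 = opadj blockB y.
  move: y; apply: opadj_unique => x y.
  have := Dirac_self_adjoint (0, 0, 0, 0, x, 0) (y, 0, 0, 0, 0, 0).
  by rewrite !hipE /= !hs0r !hs0l !addr0 !add0r.
have := Dirac_first_order_i (X, 0, 0, 0, 0, 0).
have := @Dirac_grad_even (X, 0, 0, 0, 0, 0); rewrite /= !oppr0 => /(_ erefl).
rewrite -adjA -adjB /opcomm /= Dirac0.
case: (D _) => [[[[[v1 v2] v3] v4] v5] v6] /=.
move=> [] /(eqvN0 algC)-> /(eqvN0 algC)-> /(eqvN0 algC)-> [] _ _ _ _ _.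
by rewrite subrr sub0r subr0 => /eqP; rewrite oppr_eq0 => /eqP->.
Qed.

Lemma Dirac_on_MiR m : D (0, 0, m, 0, 0, 0) = (blockA m, blockMi m, 0, 0, 0, 0).
Proof.
have := Dirac_first_order_i (0, 0, m, 0, 0, 0).
have := @Dirac_grad_odd (0, 0, m, 0, 0, 0); rewrite /= !pairN !oppr0 => /(_ erefl).
rewrite /opcomm /blockA /blockMi /=.
case: (D _) => [[[[[v1 v2] v3] v4] v5] v6] /=.
by move=> [] /esym/(eqvN0 algC)-> /esym/(eqvN0 algC)-> /esym/(eqvN0 algC)->
  [] _ _ _; rewrite !subr0 => ->.
Qed.

Lemma Dirac_on_MjR n : D (0, 0, 0, 0, n, 0) = (blockB n, 0, 0, blockMj n, 0, 0).
Proof.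
have := Dirac_first_order_i (0, 0, 0, 0, n, 0).
have := @Dirac_grad_odd (0, 0, 0, 0, n, 0); rewrite /= !pairN !oppr0 => /(_ erefl).
rewrite /opcomm /blockB /blockMj /= Dirac0.
case: (D _) => [[[[[v1 v2] v3] v4] v5] v6] /=.
by move=> [] /esym/(eqvN0 algC)-> /esym/(eqvN0 algC)-> /esym/(eqvN0 algC)->
  [] _; rewrite subrr !sub0r opprK => ->.
Qed.

Lemma Dirac_on_MiL m :
  D (0, m, 0, 0, 0, 0) = (0, 0, opadj blockMi m, 0, 0, mxadj (blockA (mxadj m))).
Proof.
have adjMi y : (D (0, y, 0, 0, 0, 0)).1.1.1.2 = opadj blockMi y.
  move: y; apply: opadj_unique => x y.
  have := Dirac_self_adjoint (0, 0, x, 0, 0, 0) (0, y, 0, 0, 0, 0).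
  by rewrite !hipE /= !hs0r !hs0l !addr0 !add0r.
by rewrite -adjMi Dirac_JrE /= !mxadj0 Dirac_on_MiR /= !mxadj0.
Qed.

Lemma Dirac_on_MjL n :
  D (0, 0, 0, n, 0, 0) = (0, 0, 0, 0, opadj blockMj n, mxadj (blockB (mxadj n))).
Proof.
have adjMj y : (D (0, 0, 0, y, 0, 0)).1.2 = opadj blockMj y.
  move: y; apply: opadj_unique => x y.
  have := Dirac_self_adjoint (0, 0, 0, 0, x, 0) (0, 0, 0, y, 0, 0).
  by rewrite !hipE /= !hs0r !hs0l !addr0 !add0r.
by rewrite -adjMj Dirac_JrE /= !mxadj0 Dirac_on_MjR /= !mxadj0.
Qed.

Lemma Dirac_on_Nji Y : D (0, 0, 0, 0, 0, Y) =
  (0, mxadj (opadj blockA (mxadj Y)), 0, mxadj (opadj blockB (mxadj Y)), 0, 0).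
Proof. by rewrite Dirac_JrE /= !mxadj0 Dirac_on_Nij /= !mxadj0. Qed.

End FiniteDirac.

Theorem mainTheorem2 (ni nj : nat) (hni : (0 < ni)%N) (hnj : (0 < nj)%N)
  (D : {linear Hsp ni nj -> Hsp ni nj}) :
  finite_Dirac D ->
  exists (A : {linear 'M[algC]_ni -> 'M[algC]_(ni, nj)})
         (B : {linear 'M[algC]_nj -> 'M[algC]_(ni, nj)})
         (Mi : {linear 'M[algC]_ni -> 'M[algC]_ni})
         (Mj : {linear 'M[algC]_nj -> 'M[algC]_nj}),
    forall h : Hsp ni nj, D h = block_Dirac A B Mi Mj h.
Proof.
move=> HD; exists (blockA D), (blockB D), (blockMi D), (blockMj D).
case=> [[[[[X mL] mR] nL] nR] Y].
have -> : (X, mL, mR, nL, nR, Y) = (X, 0, 0, 0, 0, 0) + (0, mL, 0, 0, 0, 0)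
    + (0, 0, mR, 0, 0, 0) + (0, 0, 0, nL, 0, 0) + (0, 0, 0, 0, nR, 0)
    + (0, 0, 0, 0, 0, Y) :> Hsp ni nj.
  by rewrite !pairD !addr0 !add0r.
rewrite !linearD Dirac_on_Nij // Dirac_on_MiL // Dirac_on_MiR // Dirac_on_MjL //.
by rewrite Dirac_on_MjR // Dirac_on_Nji // !pairD /= !addr0 !add0r.
Qed.
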